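(* Let $\mathfrak P$ be a prime ideal of $\mathcal O$ over $\mathfrak p$ and ${\mathcal B}$ a finite family of nonzero elements of $L$. Then ${\mathcal B}$ is $w_\mathfrak P$-semi-reduced if and only if the family $\big(\operatorname{sred}^{w_\mathfrak P(b)}_\mathfrak P(b)\big)_{b\in{\mathcal B}}$ is linearly independent over $k_\mathfrak p$.
   Context: Let $A$ be a Dedekind domain with fraction field $K$, $\mathfrak p$ a nonzero prime ideal with valuation $v_\mathfrak p$, $\pi\in\mathfrak p$ with $v_\mathfrak p(\pi)=1$, $k_\mathfrak p=A/\mathfrak p$. Let $f\in A[x]$ be monic irreducible separable, $\theta$ a root, $L=K(\theta)$, $\mathcal O$ the integral closure of $A$ in $L$. For a prime $\mathfrak P$ of $\mathcal O$ over $\mathfrak p$ with ramification index $e$, let $v_\mathfrak P$ be its normalized valuation, $\mathcal O_{(\mathfrak P)}$ its valuation ring, $w_\mathfrak P=v_\mathfrak P/e$. The quotient $\mathcal O_{(\mathfrak P)}/\pi\mathcal O_{(\mathfrak P)}=\mathcal O_{(\mathfrak P)}/\mathfrak P^e\mathcal O_{(\mathfrak P)}$ is a $k_\mathfrak p$-vector space (the paper encodes its elements by the first $e$ digits of $\pi_\mathfrak P$-adic expansions, as elements of $k_\mathfrak P^e$). For $r\in\mathbb Q$ and $z\in L$ with $w_\mathfrak P(z)\ge\lfloor r\rfloor$, define $\operatorname{sred}^r_\mathfrak P(z)$ as the class of $\pi^{-\lfloor r\rfloor}z$ in $\mathcal O_{(\mathfrak P)}/\pi\mathcal O_{(\mathfrak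 P)}$. A finite family ${\mathcal B}\subset L$ is $w$-semi-reduced if $\lfloor w(\sum_b\lambda_bb)\rfloor=\min_b\lfloor w(\lambda_bb)\rfloor$ for all $\lambda_b\in K$. *)

From HB Require Import structures.
From mathcomp Require Import all_boot all_order all_algebra all_field.
Set Implicit Arguments. Unset Strict Implicit. Unset Printing Implicit Defensive.
Import Order.TTheory GRing.Theory Num.Theory.
Local Open Scope ring_scope.

(* A (normalized-or-not) discrete valuation, given by its values on nonzero
   elements: v : R -> int, only meaningful on R^x (the value at 0 stands for
   +infinity and is never used). *)
Definition is_dval (R : nzRingType) (v : R -> int) : Prop :=
  (forall x y : R, x != 0 -> y != 0 -> v (x * y) = v x + v y) /\
  (forall x y : R, x != 0 -> y != 0 -> x + y != 0 ->
     Num.min (v x) (v y) <= v (x + y)).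

Definition wP (K : fieldType) (L : fieldExtType K) (vP : L -> int) (e : nat)
  (z : L) : rat := (vP z)%:~R / e%:R.

(* floor (w_P z) in Z u {+oo}: None encodes +oo (i.e. z = 0). *)
Definition floorw (K : fieldType) (L : fieldExtType K) (vP : L -> int)
  (e : nat) (z : L) : option int :=
  if z == 0 then None else Some (Num.floor (wP vP e z)).

Definition omin (x y : option int) : option int :=
  match x, y with
  | None, _ => y
  | _, None => x
  | Some a, Some b => Some (Num.min a b)
  end.

Definition semi_reduced (K : fieldType) (L : fieldExtType K) (vP : L -> int)
  (e : nat) (n : nat) (B : 'I_n -> L) : Prop :=
  forall lam : 'I_n -> K,
    floorw vP e (\sum_(i < n) lam i *: B i)
    = \big[omin/None]_(i < n) floorw vP e (lam i *: B i).

Definition in_Op (K : fieldType) (vp : K -> int) (c : K) : Prop :=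
  c = 0 \/ 0 <= vp c.
Definition in_pOp (K : fieldType) (vp : K -> int) (c : K) : Prop :=
  c = 0 \/ 1 <= vp c.
Definition in_piOP (K : fieldType) (L : fieldExtType K) (vP : L -> int)
  (e : nat) (z : L) : Prop :=
  z = 0 \/ e%:Z <= vP z.                     (* z in pi O_(P) = P^e O_(P) *)

(* A representative in O_(P) of sred^r_P(z): pi^(-floor r) z. *)
Definition sred_rep (K : fieldType) (L : fieldExtType K) (pi : K) (r : rat)
  (z : L) : L := (pi ^ (- Num.floor r)) *: z.

(* The classes of the z_i in O_(P)/pi O_(P) are linearly independent over
   k_p = O_(p)/p O_(p) (= A/p): any relation sum_i c_i [z_i] = 0 with
   c_i in O_(p) has all c_i in p O_(p). *)
Definition kp_lin_indep (K : fieldType) (L : fieldExtType K) (vp : K -> int)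
  (vP : L -> int) (e : nat) (n : nat) (z : 'I_n -> L) : Prop :=
  forall c : 'I_n -> K,
    (forall i, in_Op vp (c i)) ->
    in_piOP vP e (\sum_(i < n) c i *: z i) ->
    forall i, in_pOp vp (c i).

(* Rescaling each b by pi^(-floor w(b)) changes neither side of the equivalence, and
   afterwards every member z of the family satisfies 0 <= w(z) < 1, so that
   floor w(c z) = v_p(c) for c in K^x.  For such a family, semi-reducedness says that
   floor w(sum c_i z_i) = min v_p(c_i); after dividing the c_i by pi^(min v_p(c_i))
   this is the statement that a relation sum c_i [z_i] = 0 mod pi with
   p-integral c_i forces all c_i into p, i.e. linear independence over k_p. *)
From HB Require Import structures.
From mathcomp Require Import all_boot all_order all_algebra all_field.
From mathcomp Require Import zify.
Set Implicit Arguments. Unset Strict Implicit. Unset Printing Implicit Defensive.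
Import Order.TTheory GRing.Theory Num.Theory.
Local Open Scope ring_scope.

Lemma dval1 (R : nzRingType) (v : R -> int) : is_dval v -> v 1 = 0.
Proof.
by case=> vM _; have := vM 1 1 (oner_neq0 _) (oner_neq0 _); rewrite mulr1; lia.
Qed.

Lemma dvalXz (K : fieldType) (v : K -> int) (pi : K) :
  is_dval v -> pi != 0 -> v pi = 1 -> forall k : int, v (pi ^ k) = k.
Proof.
move=> vD pi0 vpi; have vM := vD.1.
have vXn (n : nat) : v (pi ^ n) = n.
  elim: n => [|n IHn]; first by rewrite expr0z dval1.
  by rewrite exprSz vM ?expfz_neq0 // vpi IHn; lia.
have vXN (k : int) : v (pi ^ k) + v (pi ^ (- k)) = 0.
  by rewrite -vM ?expfz_neq0 // -expfzDr // subrr expr0z dval1.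
by case=> m; [exact: vXn | have := vXN (Negz m); rewrite NegzE opprK vXn; lia].
Qed.

Lemma dval_sum_ge (R : nzRingType) (v : R -> int) (k : int) (I : Type)
    (r : seq I) (F : I -> R) :
  is_dval v -> (forall i, F i = 0 \/ k <= v (F i)) ->
  \sum_(i <- r) F i = 0 \/ k <= v (\sum_(i <- r) F i).
Proof.
case=> _ vD FP; apply: (big_ind (fun x => x = 0 \/ k <= v x)) => [|x y|i _];
  [by left | | exact: FP].
move=> [->|kx]; first by rewrite add0r.
move=> [->|ky]; first by rewrite addr0; right.
have [->|x0] := eqVneq x 0; first by rewrite add0r; right.
have [->|y0] := eqVneq y 0; first by rewrite addr0; right.
have [|s0] := eqVneq (x + y) 0; [by left | right].
by apply: le_trans (vD x y x0 y0 s0); rewrite le_min kx ky.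
Qed.

Lemma ominA : associative omin.
Proof. by case=> [a|] [b|] [c|] //=; rewrite minA. Qed.
Lemma ominC : commutative omin.
Proof. by case=> [a|] [b|] //=; rewrite minC. Qed.
Lemma omin0o : left_id None omin.
Proof. by case. Qed.
HB.instance Definition _ :=
  Monoid.isComLaw.Build (option int) None omin ominA ominC omin0o.

Lemma big_omin_None (n : nat) (F : 'I_n -> option int) :
  (forall i, F i = None) -> \big[omin/None]_(i < n) F i = None.
Proof. by move=> F0; apply: big1 => i _. Qed.

Lemma big_omin_Some (n : nat) (F : 'I_n -> option int) (m : int) (j : 'I_n) :
  F j = Some m -> (forall i, F i = None \/ exists2 a, F i = Some a & m <= a) ->
  \big[omin/None]_(i < n) F i = Some m.
Proof.
move=> Fj FP; rewrite (bigD1 j) //= Fj.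
have [->|[a -> ma]] //: \big[omin/None]_(i < n | i != j) F i = None \/
    exists2 a, \big[omin/None]_(i < n | i != j) F i = Some a & m <= a.
  apply: (big_ind (fun o => o = None \/ exists2 a, o = Some a & m <= a));
    [by left | | by move=> i _; apply: FP].
  move=> x y [->|[a -> ma]] [->|[b -> mb]] /=; first by left.
  - by right; exists b.
  - by right; exists a.
  - by right; exists (Num.min a b); rewrite ?le_min ?ma ?mb.
by rewrite /= (min_idPl ma).
Qed.

Lemma semi_reduced_rescale (K : fieldType) (L : fieldExtType K) (vP : L -> int)
    (e n : nat) (a : 'I_n -> K) (B B' : 'I_n -> L) :
  (forall i, B' i = a i *: B i) -> semi_reduced vP e B -> semi_reduced vP e B'.
Proof.
move=> defB' SR lam; have lamB' i : lam i *: B' i = (lam i * a i) *: B i.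
  by rewrite defB' scalerA.
by under eq_bigr do rewrite lamB'; under [RHS]eq_bigr do rewrite lamB'.
Qed.

Section ValuedExtension.

Variables (K : fieldType) (L : fieldExtType K) (vp : K -> int) (vP : L -> int).
Variables (e : nat) (pi : K).
Hypotheses (vpD : is_dval vp) (vPD : is_dval vP) (pi0 : pi != 0) (vpi : vp pi = 1).
Hypothesis (e_gt0 : (0 < e)%N).
Hypothesis (vP_alg : forall x : K, x != 0 -> vP x%:A = e%:Z * vp x).

Lemma vPZ (c : K) (y : L) : c != 0 -> y != 0 -> vP (c *: y) = e%:Z * vp c + vP y.
Proof.
move=> c0 y0; have cA0 : c%:A != 0 :> L by rewrite scaler_eq0 negb_or c0 oner_neq0.
by rewrite -mulr_algl vPD.1 // vP_alg.
Qed.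

Lemma floorwZ (c : K) (y : L) : c != 0 ->
  floorw vP e (c *: y) = omap (fun m => m + vp c) (floorw vP e y).
Proof.
move=> c0; have [->|y0] := eqVneq y 0; first by rewrite scaler0 /floorw eqxx.
rewrite /floorw scaler_eq0 (negbTE c0) (negbTE y0) /= /wP vPZ // addrC.
have eR0 : e%:R != 0 :> rat by rewrite pnatr_eq0 -lt0n.
rewrite intrD mulrDl intrM mulrAC -[e%:~R]/(e%:R : rat) divff // mul1r.
by rewrite floorDrz ?intr_int ?intrKfloor.
Qed.

Lemma floorw_eqS0 (y : L) :
  floorw vP e y = Some 0 <-> y != 0 /\ 0 <= vP y < e%:Z.
Proof.
have eR : 0 < e%:R :> rat by rewrite ltr0n.
have floor_wP_eq0 :
    (Num.floor ((vP y)%:~R / e%:R : rat) == 0) = (0 <= vP y < e%:Z).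
  rewrite floor_eq add0r rmorph0 rmorph1 ler_pdivlMr // ltr_pdivrMr // mul0r mul1r.
  by rewrite ler0z -[e%:R]/(e%:~R : rat) ltr_int.
rewrite /floorw /wP -floor_wP_eq0; case: eqP => [_|/eqP y0]; first by split=> // -[].
by split=> [[->]|[_ /eqP->]].
Qed.

Lemma floorw_sred_rep (y : L) : y != 0 ->
  floorw vP e (sred_rep pi (wP vP e y) y) = Some 0.
Proof.
by move=> y0; rewrite floorwZ ?expfz_neq0 // /floorw (negbTE y0) /= dvalXz // addrN.
Qed.

Lemma floorw_eqS0_Op (y : L) :
  in_Op vP y -> floorw vP e y = Some 0 <-> ~ in_piOP vP e y.
Proof.
rewrite floorw_eqS0 /in_piOP; have [-> _|y0 [/eqP|vPy_ge0]] := eqVneq y 0.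
- by split=> [[]|not_pi]; [|case: not_pi; left].
- by rewrite (negbTE y0).
rewrite vPy_ge0 ltNge; split=> [[_ /negP not_le] [/eqP|//]|not_pi].
  by rewrite (negbTE y0).
by split=> //; apply/negP => e_le; apply: not_pi; right.
Qed.

Section NormalizedFamily.

Variables (n : nat) (z : 'I_n -> L).
Hypothesis z_normal : forall i, floorw vP e (z i) = Some 0.

Lemma sum_normal_Op (c : 'I_n -> K) :
  (forall i, in_Op vp (c i)) -> in_Op vP (\sum_(i < n) c i *: z i).
Proof.
move=> cO; apply: dval_sum_ge => // i; have [->|ci0] := eqVneq (c i) 0.
  by left; rewrite scale0r.
have /floorw_eqS0[zi0 /andP[vPz_ge0 _]] := z_normal i.
by case: (cO i) => [/eqP|vci]; [rewrite (negbTE ci0) | right; rewrite vPZ //; nia].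
Qed.

Lemma big_floorw_normal (c : 'I_n -> K) (j : 'I_n) :
  c j != 0 -> (forall i, c i != 0 -> vp (c j) <= vp (c i)) ->
  \big[omin/None]_(i < n) floorw vP e (c i *: z i) = Some (vp (c j)).
Proof.
have floorw_cz i : c i != 0 -> floorw vP e (c i *: z i) = Some (vp (c i)).
  by move=> ci0; rewrite floorwZ // z_normal /= add0r.
move=> cj0 cj_min.
apply: (@big_omin_Some _ (fun i => floorw vP e (c i *: z i)) _ j (floorw_cz j cj0)).
move=> i; have [->|ci0] := eqVneq (c i) 0.
  by left; rewrite scale0r /floorw eqxx.
by right; exists (vp (c i)); [apply: floorw_cz | apply: cj_min].
Qed.

Lemma semi_reduced_kp_lin_indep :
  semi_reduced vP e z -> kp_lin_indep vp vP e z.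
Proof.
move=> SR c cO sum_pi i; have [->|ci0] := eqVneq (c i) 0; first by left.
rewrite /in_pOp; have [|vci_lt1] := lerP 1 (vp (c i)); [by right | exfalso].
have vci0 : vp (c i) = 0 by case: (cO i) => [/eqP|]; [rewrite (negbTE ci0) | lia].
have : floorw vP e (\sum_(i < n) c i *: z i) = Some 0.
  rewrite SR (big_floorw_normal ci0) ?vci0 // => j cj0.
  by case: (cO j) => [/eqP|//]; rewrite (negbTE cj0).
by move/(floorw_eqS0_Op (sum_normal_Op cO)).
Qed.

Lemma kp_lin_indep_semi_reduced :
  kp_lin_indep vp vP e z -> semi_reduced vP e z.
Proof.
move=> LI lam; case: (pickP (fun i => lam i != 0)) => [j0 lamj00|lam0]; last first.
  have lam0' i : lam i = 0 by apply/eqP/negbFE/lam0.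
  rewrite big1 => [|i _]; last by rewrite lam0' scale0r.
  by rewrite /floorw eqxx big_omin_None // => i; rewrite lam0' scale0r /floorw eqxx.
have [j lamj0 lamj_min] :=
  arg_minP (fun i => vp (lam i)) (lamj00 : (fun i => lam i != 0) j0).
rewrite (big_floorw_normal lamj0 lamj_min); set m := vp (lam j).
set S := \sum_(i < n) lam i *: z i; set c := fun i => pi ^ (- m) * lam i.
have cO i : in_Op vp (c i).
  rewrite /c; have [->|lami0] := eqVneq (lam i) 0; first by left; rewrite mulr0.
  by right; rewrite vpD.1 ?expfz_neq0 // dvalXz //; have := lamj_min i lami0; lia.
have cj_not_p : ~ in_pOp vp (c j).
  rewrite /in_pOp /c vpD.1 ?expfz_neq0 // dvalXz // => -[|]; last by lia.
  by apply/eqP; rewrite mulf_neq0 ?expfz_neq0.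
have sum_c : \sum_(i < n) c i *: z i = pi ^ (- m) *: S.
  by rewrite scaler_sumr; apply: eq_bigr => i _; rewrite scalerA.
have S'_normal : floorw vP e (pi ^ (- m) *: S) = Some 0.
  rewrite -sum_c; apply/(floorw_eqS0_Op (sum_normal_Op cO)).
  by move=> /(LI c cO)/(_ j).
have -> : S = pi ^ m *: (pi ^ (- m) *: S).
  by rewrite scalerA -expfzDr // subrr expr0z scale1r.
by rewrite floorwZ ?expfz_neq0 // S'_normal /= add0r dvalXz.
Qed.

End NormalizedFamily.

End ValuedExtension.

Theorem mainTheorem5 (K : fieldType) (L : fieldExtType K)
  (vp : K -> int) (vP : L -> int) (e : nat) (pi : K)
  (n : nat) (B : 'I_n -> L) :
  is_dval vp -> is_dval vP ->
  pi != 0 -> vp pi = 1 ->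
  (0 < e)%N ->
  (forall x : K, x != 0 -> vP (x%:A) = e%:Z * vp x) ->
  (exists t : L, t != 0 /\ vP t = 1) ->
  (forall i, B i != 0) ->
  (semi_reduced vP e B <->
   kp_lin_indep vp vP e (fun i => sred_rep pi (wP vP e (B i)) (B i))).
Proof.
(* No uniformizer of P is needed. *)
move=> vpD vPD pi0 vpi e_gt0 vP_alg _ B0.
set z := fun i => sred_rep pi (wP vP e (B i)) (B i).
have z_normal i : floorw vP e (z i) = Some 0.
  by apply: (@floorw_sred_rep _ _ vp vP e pi).
have scale_B i : z i = pi ^ (- Num.floor (wP vP e (B i))) *: B i by [].
have unscale_z i : B i = pi ^ Num.floor (wP vP e (B i)) *: z i.
  by rewrite scale_B scalerA -expfzDr // subrr expr0z scale1r.
split=> [SR|LI].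
- apply: (@semi_reduced_kp_lin_indep _ _ vp vP e pi) => //.
  exact: semi_reduced_rescale scale_B SR.
- apply: semi_reduced_rescale unscale_z _.
  by apply: (@kp_lin_indep_semi_reduced _ _ vp vP e pi).
Qed.
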